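(* Let $G=\langle\omega,\xi\mid \xi^2=1,\ \omega^2=\xi\omega^5\xi\rangle$ and let $$D_{14}\times\mathbb{Z}/3=\langle a,b,\xi\mid \xi^2=1,\ a^3=1,\ b^7=1,\ \xi b\xi=b^6,\ [a,b]=[a,\xi]=1\rangle,$$ where $[x,y]=xyx^{-1}y^{-1}$. Then the assignment $\xi\mapsto\xi$, $\omega\mapsto ab$ defines an isomorphism $G\cong D_{14}\times\mathbb{Z}/3$. *)

From HB Require Import structures.
From mathcomp Require Import ssreflect ssrfun ssrbool eqtype choice ssrnat monoid.
Set Implicit Arguments. Unset Strict Implicit. Unset Printing Implicit Defensive.
Local Open Scope group_scope.

Definition G_rels (H : groupType) (w xi : H) : Prop :=
  xi ^+ 2 = 1 /\ w ^+ 2 = xi * w ^+ 5 * xi.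

Definition D_rels (H : groupType) (a b xi : H) : Prop :=
  xi ^+ 2 = 1 /\ a ^+ 3 = 1 /\ b ^+ 7 = 1 /\ xi * b * xi = b ^+ 6 /\
  a * b * a^-1 * b^-1 = 1 /\ a * xi * a^-1 * xi^-1 = 1.

Definition is_hom (K H : groupType) (f : K -> H) : Prop :=
  forall x y : K, f (x * y) = f x * f y.

(* (K; g1, g2) is a presentation of the group with relations R, i.e. K together
   with g1, g2 satisfies the universal property of < g1, g2 | R >:
   the relations hold, and for every group H and elements h1, h2 of H
   satisfying R there is a unique homomorphism K -> H with g_i |-> h_i. *)
Definition presents2 (R : forall H : groupType, H -> H -> Prop)
    (K : groupType) (g1 g2 : K) : Prop :=
  R K g1 g2 /\
  forall (H : groupType) (h1 h2 : H), R H h1 h2 ->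
    (exists f : K -> H, [/\ is_hom f, f g1 = h1 & f g2 = h2]) /\
    (forall f f' : K -> H, is_hom f -> is_hom f' ->
       f g1 = f' g1 -> f g2 = f' g2 -> f =1 f').

Definition presents3 (R : forall H : groupType, H -> H -> H -> Prop)
    (K : groupType) (g1 g2 g3 : K) : Prop :=
  R K g1 g2 g3 /\
  forall (H : groupType) (h1 h2 h3 : H), R H h1 h2 h3 ->
    (exists f : K -> H, [/\ is_hom f, f g1 = h1, f g2 = h2 & f g3 = h3]) /\
    (forall f f' : K -> H, is_hom f -> is_hom f' ->
       f g1 = f' g1 -> f g2 = f' g2 -> f g3 = f' g3 -> f =1 f').

From HB Require Import structures.
From mathcomp Require Import ssreflect ssrfun ssrbool eqtype choice ssrnat div monoid.
Set Implicit Arguments. Unset Strict Implicit. Unset Printing Implicit Defensive.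
Local Open Scope group_scope.

(* In G, put u := xi w xi.  The relation w^2 = xi w^5 xi says u^5 = w^2, and
   conjugating it by xi gives u^2 = w^5; hence w^25 = u^10 = w^4, so w^21 = 1,
   and u = u^22 = w^55 = w^13.  Conjugation by xi therefore raises w to the
   13th power, which fixes a := w^7 (of order 3) and inverts b := w^15 (of
   order 7), with w = a b.  Conversely, in D14 x Z/3 the element a b satisfies
   the relations of G, and a = (a b)^7, b = (a b)^15.  So the two presentations
   define mutually inverse maps, and the universal properties transfer. *)

Section GroupFacts.
Variable H : groupType.
Implicit Types x y : H.

Lemma expg_mod x k n : x ^+ k = 1 -> x ^+ (n %% k) = x ^+ n.
Proof.
by move=> xk1; rewrite {2}(divn_eq n k) expgnDr mulnC expgnA xk1 expg1n mul1g.
Qed.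

Lemma eq_expg_mod x k m n : x ^+ k = 1 -> m = n %[mod k] -> x ^+ m = x ^+ n.
Proof. by move=> xk1 emn; rewrite -(expg_mod m xk1) emn expg_mod. Qed.

Lemma conjg_involution x y : x ^+ 2 = 1 -> y ^ x = x * y * x.
Proof. by move=> x2; rewrite conjgE (mulg1_eq x2) mulgA. Qed.

Lemma commute_of_commutator_eq1 x y : x * y * x^-1 * y^-1 = 1 -> commute x y.
Proof. by move/divg1_eq=> e; rewrite /commute -[y in RHS]e mulgVK. Qed.

Lemma is_hom1 (K : groupType) (f : K -> H) : is_hom f -> f 1 = 1.
Proof. by move=> hom_f; apply: (@mulgI _ (f 1)); rewrite -hom_f !mulg1. Qed.

Lemma is_homX (K : groupType) (f : K -> H) (x : K) n :
  is_hom f -> f (x ^+ n) = f x ^+ n.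
Proof.
move=> hom_f; elim: n => [|n IHn]; first exact: is_hom1.
by rewrite !expgS hom_f IHn.
Qed.

End GroupFacts.

Section GRelations.
Variables (H : groupType) (w xi : H).
Hypothesis relsG : G_rels w xi.

Let xi2 : xi ^+ 2 = 1. Proof. by case: relsG. Qed.
Let w2 : w ^+ 2 = xi * w ^+ 5 * xi. Proof. by case: relsG. Qed.

Let conj_expw2 : (w ^ xi) ^+ 2 = w ^+ 5.
Proof. by rewrite -conjXg w2 -conjg_involution // -conjgM -expg2 xi2 conjg1. Qed.

Lemma G_rels_expw21 : w ^+ 21 = 1.
Proof.
have conj_expw5 : (w ^ xi) ^+ 5 = w ^+ 2 by rewrite -conjXg conjg_involution.
apply: (@mulIg _ (w ^+ 4)); rewrite mul1g -expgnDr.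
by rewrite (expgnA w 5 5) -conj_expw2 -expgnA (expgnA _ 5 2) conj_expw5 -expgnA.
Qed.

Lemma G_rels_conjw : w ^ xi = w ^+ 13.
Proof.
have u21 : (w ^ xi) ^+ 21 = 1 by rewrite -conjXg G_rels_expw21 conj1g.
rewrite -[LHS]expg1 (eq_expg_mod u21 (_ : 1 = 2 * 11 %[mod 21])) //.
by rewrite expgnA conj_expw2 -expgnA; exact: (eq_expg_mod G_rels_expw21).
Qed.

Lemma G_rels_conjXw n : w ^+ n ^ xi = w ^+ (13 * n).
Proof. by rewrite conjXg G_rels_conjw -expgnA. Qed.

Lemma G_rels_D_rels : D_rels (w ^+ 7) (w ^+ 15) xi.
Proof.
have w21 := G_rels_expw21.
have xi_w7 : commute xi (w ^+ 7).
  rewrite /commute [RHS]conjgC G_rels_conjXw.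
  by rewrite (eq_expg_mod w21 (_ : 13 * 7 = 7 %[mod 21])).
split=> //; do 4?split.
- by rewrite -expgnA.
- by rewrite -expgnA (eq_expg_mod w21 (_ : 15 * 7 = 0 %[mod 21])).
- by rewrite -conjg_involution // G_rels_conjXw -expgnA; exact: (eq_expg_mod w21).
- by rewrite (commuteX2 _ _ (commute_refl w)) mulgK mulgV.
- by rewrite -xi_w7 mulgK mulgV.
Qed.

Lemma G_rels_expw7_mul_expw15 : w ^+ 7 * w ^+ 15 = w.
Proof. by rewrite -expgnDr -[RHS]expg1; exact: (eq_expg_mod G_rels_expw21). Qed.

End GRelations.

Section DRelations.
Variables (K : groupType) (a b xi : K).
Hypothesis relsD : D_rels a b xi.

Let xi2 : xi ^+ 2 = 1. Proof. by case: relsD. Qed.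
Let a3 : a ^+ 3 = 1. Proof. by case: relsD => _ []. Qed.
Let b7 : b ^+ 7 = 1. Proof. by case: relsD => _ [_ []]. Qed.
Let xi_b : xi * b * xi = b ^+ 6. Proof. by case: relsD => _ [_ [_ []]]. Qed.

Let ab_comm : commute a b.
Proof. by apply: commute_of_commutator_eq1; case: relsD => _ [_ [_ [_ []]]]. Qed.

Let a_xi_comm : commute a xi.
Proof. by apply: commute_of_commutator_eq1; case: relsD => _ [_ [_ [_ []]]]. Qed.

Lemma D_rels_expab7 : (a * b) ^+ 7 = a.
Proof. by rewrite expgMn // b7 mulg1 -[RHS]expg1; exact: (eq_expg_mod a3). Qed.

Lemma D_rels_expab15 : (a * b) ^+ 15 = b.
Proof.
rewrite expgMn // (eq_expg_mod a3 (_ : 15 = 0 %[mod 3])) // mul1g.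
by rewrite -[RHS]expg1; exact: (eq_expg_mod b7).
Qed.

Lemma D_rels_G_rels : G_rels (a * b) xi.
Proof.
split=> //.
have a2_fixed : a ^+ 2 ^ xi = a ^+ 2.
  by apply/conjg_fixP/commgP/commute_sym/commuteX/commute_sym.
rewrite -conjg_involution // !expgMn // (eq_expg_mod a3 (_ : 5 = 2 %[mod 3])) //.
rewrite conjMg a2_fixed conjXg conjg_involution // xi_b -expgnA.
by congr (_ * _); exact: (eq_expg_mod b7).
Qed.

End DRelations.

Theorem lemma3p2 (K : groupType) (a b xi : K) :
  presents3 D_rels a b xi -> presents2 G_rels (a * b) xi.
Proof.
case=> relsD univD; split; first exact: D_rels_G_rels.
move=> H w x relsG.
have [[f [hom_f fa fb fxi]] uniqD] := univD _ _ _ _ (G_rels_D_rels relsG).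
split.
  exists f; split=> //.
  by rewrite hom_f fa fb (G_rels_expw7_mul_expw15 relsG).
move=> g g' hom_g hom_g' gab gxi; apply: uniqD => //.
- by rewrite -(D_rels_expab7 relsD) !is_homX // gab.
- by rewrite -(D_rels_expab15 relsD) !is_homX // gab.
Qed.
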